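(* Let $(\mathcal{P},d)$ be a 1-2-metric and $\alpha>0$. Every strategy profile that is a Greedy Equilibrium of the greedy-routing network creation game on $(\mathcal{P},d)$ with edge price $\alpha$ yields a network $G(\mathbf{s})$ that is a Domination Set Graph.
   Context: A 1-2-metric is a finite metric space $(\mathcal{P},d)$ with $d(u,v)\in\{1,2\}$ for all distinct $u,v$; arcs of length 1 (resp. 2) are called 1-edges (resp. 2-edges). Game: the agents are the points of $\mathcal{P}$. A strategy of agent $u$ is $S_u\subseteq\mathcal{P}\setminus\{u\}$; a profile $\mathbf{s}=(S_u)_u$ defines the directed network $G(\mathbf{s})$ on $\mathcal{P}$ with arcs $(u,v)$, $v\in S_u$, of length $d(u,v)$. A greedy path from $u$ to $v$ is a directed path $u=x_1,\dots,x_j=v$ of arcs with $d(x_i,v)>d(x_{i+1},v)$ for all $i$. $\mathrm{stretch}(u,v)$ is the minimum length of a greedy path from $u$ to $v$ divided by $d(u,v)$, or a fixed sufficiently large penalty constant $Z$ if no greedy path exists. The cost of $u$ is $c_u(\mathbf{s})=\sum_{v\ne u}\mathrm{stretch}_{G(\mathbf{s})}(u,v)+\alpha|S_u|$. A profile is a Greedy Equilibrium (GE) if no agent $u$ can strictly decrease $c_u$ by changing $S_u$ through adding one element, deleting one element, or replacing one element by another one (swap), with all other strategies fixed. Notation for a directed network $G$ on $\mathcal{P}$ and node $u$: $N(u)$ is the set of out-neighbours of $u$; $W_1(u)=\{v\in N(u):d(u,v)=1\}$; $W_2(u)=\{v\in N(u):d(u,v)=2\}$; $W_{1\to1}(u)$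 is the set of nodes $w\ne u$ such that there is $v$ with $d(u,v)=d(v,w)=1$ and $(u,v),(v,w)$ arcs of $G$; $W_2^+(u)=W_2(u)\cap W_{1\to1}(u)$. $G^1_{-u}$ is the directed graph on $\mathcal{P}\setminus\{u\}$ having arc $(v,w)$ for every pair with $d(v,w)=1$. A set $D$ of vertices of a directed graph $H$ is dominating if every vertex of $H$ not in $D$ has an in-neighbour in $D$. A Domination Set Graph (DSG) is a directed network $G$ on $\mathcal{P}$ such that (i) $G$ contains every arc $(v,w)$ with $d(v,w)=1$; (ii) for every node $u$, $N(u)$ is dominating in $G^1_{-u}$; (iii) for every node $u$ there is no set $N'\subseteq\mathcal{P}\setminus\{u\}$, obtained from $N(u)$ by deleting one element or by replacing one element by another, such that $N'$ contains all $v$ with $d(u,v)=1$, $N'$ is dominating in $G^1_{-u}$, and $|\{v\in N': d(u,v)=2\}\cap W_{1\to1}(u)|<|W_2^+(u)|$. *)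

From HB Require Import structures.
From mathcomp Require Import all_boot all_order all_algebra.
Set Implicit Arguments. Unset Strict Implicit. Unset Printing Implicit Defensive.
Import Order.TTheory GRing.Theory Num.Theory.
Local Open Scope ring_scope.

Section Game.
Variable P : finType.
Variable d : P -> P -> nat.

(* 1-2-metric: d u u = 0, symmetric, values in {1,2} on distinct points
   (the triangle inequality then holds automatically). *)
Definition one_two_metric : Prop :=
  (forall u, d u u = 0%N) /\ (forall u v, d u v = d v u) /\
  (forall u v, u != v -> d u v = 1%N \/ d u v = 2%N).

(* A strategy profile: S u is the strategy of agent u; the network G(S) has
   arc (u,v) iff v \in S u. *)
Definition profile := P -> {set P}.

Definition valid_profile (S : profile) : Prop := forall u, u \notin S u.

Definition is_greedy (S : profile) (v x : P) (p : seq P) : bool :=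
  path (fun a b => (b \in S a) && (d b v < d a v)%N) x p && (last x p == v).

Definition plen (x : P) (p : seq P) : nat := sumn (pairmap d x p).

(* all sequences of points with at most #|P|-1 entries (so paths with at most
   #|P| nodes); every greedy path has pairwise distinct nodes (distances to
   the target strictly decrease), so every greedy path is among them. *)
Definition cands : seq (seq P) :=
  flatten (map (fun k => map (@tval k P) (enum {: k.-tuple P})) (iota 0 #|P|)).

Definition greedy_lens (S : profile) (u v : P) : seq nat :=
  [seq plen u p | p <- cands & is_greedy S v u p].

Variable R : realFieldType.

Definition stretch (Z : R) (S : profile) (u v : P) : R :=
  match greedy_lens S u v with
  | [::] => Z
  | l :: ls => (foldr minn l ls)%:R / (d u v)%:R
  end.

Definition cost (Z alpha : R) (S : profile) (u : P) : R :=
  \sum_(v | v != u) stretch Z S u v + alpha * #|S u|%:R.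

Definition upd (S : profile) (u : P) (T : {set P}) : profile :=
  fun x => if x == u then T else S x.

Definition one_move (u : P) (A B : {set P}) : Prop :=
  u \notin B /\
  ((exists v, B = v |: A) \/ (exists v, v \in A /\ B = A :\ v) \/
   (exists v w, v \in A /\ w \notin A /\ B = w |: (A :\ v))).

Definition greedy_equilibrium (Z alpha : R) (S : profile) : Prop :=
  valid_profile S /\
  forall u T, one_move u (S u) T -> ~ (cost Z alpha (upd S u T) u < cost Z alpha S u).

Definition dominating (u : P) (D : {set P}) : Prop :=
  forall w, w != u -> w \notin D ->
    exists x, [/\ x \in D, x != u & d x w = 1%N].

Definition W11 (S : profile) (u : P) : {set P} :=
  [set w | (w != u) &&
     [exists v, [&& d u v == 1%N, v \in S u, d v w == 1%N & w \in S v]]].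

Definition W2 (S : profile) (u : P) : {set P} := [set v in S u | d u v == 2%N].

Definition W2plus (S : profile) (u : P) : {set P} := W2 S u :&: W11 S u.

Definition del_or_swap (u : P) (A B : {set P}) : Prop :=
  u \notin B /\
  ((exists v, v \in A /\ B = A :\ v) \/
   (exists v w, v \in A /\ w \notin A /\ B = w |: (A :\ v))).

Definition DSG (S : profile) : Prop :=
  (forall v w, d v w = 1%N -> w \in S v) /\
  (forall u, dominating u (S u)) /\
  (forall u N', del_or_swap u (S u) N' ->
     ~ [/\ (forall v, d u v = 1%N -> v \in N'),
           dominating u N' &
           (#|[set v in N' | d u v == 2%N] :&: W11 S u| < #|W2plus S u|)%N]).

End Game.

From HB Require Import structures.
From mathcomp Require Import all_boot all_order all_algebra zify lra.
Import Order.TTheory GRing.Theory Num.Theory.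
Local Open Scope ring_scope.

(* In a 1-2-metric a greedy path has at most two arcs, so a finite stretch is
   1 or 3/2, and it is 1 exactly when (u,v) is an arc or d(u,v) = 2 and v lies
   in W_{1->1}(u).  Once Z >= alpha + 2, an agent with no greedy path to some
   target gains Z - 1 > alpha by buying that arc; hence in an equilibrium every
   target is greedily reachable, which forces all 1-edges and domination.
   For the last condition, the cost of u before the move is at least, and
   after a deletion or swap keeping the 1-edges and domination at most, the
   sum over targets v of 1 + [d(u,v) = 2, v outside W_{1->1}(u) and v not
   bought] / 2, plus alpha per bought arc.  Counting N(u) by distance and by
   membership in W_{1->1}(u) shows that a move losing a point of W_2^+(u)
   thereby saves alpha (deletion) or 1/2 (swap). *)

Lemma mem_cands (P : finType) (p : seq P) : (size p < #|P|)%N -> p \in cands P.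
Proof.
move=> sp; apply/flatten_mapP; exists (size p); first by rewrite mem_iota.
by apply/mapP; exists (in_tuple p); rewrite ?mem_enum.
Qed.

Lemma foldr_minn_le (l : nat) ls x : x \in l :: ls -> (foldr minn l ls <= x)%N.
Proof.
elim: ls => [|y ls IH] /=; first by rewrite inE => /eqP ->.
rewrite !inE => /or3P[xl|/eqP->|xs]; last 2 first.
- exact: geq_minl.
- by apply: leq_trans (geq_minr _ _) (IH _); rewrite inE xs orbT.
by apply: leq_trans (geq_minr _ _) (IH _); rewrite inE xl.
Qed.

Lemma foldr_minn_mem (l : nat) ls : foldr minn l ls \in l :: ls.
Proof.
elim: ls => [|y ls IH] /=; first by rewrite inE.
rewrite /minn; case: ifP => _; first by rewrite !inE eqxx orbT.
by move: IH; rewrite !inE => /orP[->|->]; rewrite ?orbT.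
Qed.

Lemma sumr_mem_card (R : nzSemiRingType) {T : finType} {u : T} {A : {set T}} :
  u \notin A -> \sum_(v | v != u) (v \in A)%:R = #|A|%:R :> R.
Proof.
move=> uA; rewrite (bigID (mem A)) /= [X in _ + X]big1 => [|v /andP[_ /negbTE->]//].
rewrite addr0 (eq_bigl (fun v => v \in A)) => [|v]; last first.
  by rewrite andbC; case: (boolP (v \in A)) => //= vA; apply: contraNneq uA => <-.
by rewrite (eq_bigr (fun=> 1)) => [|v ->]; rewrite ?sumr_const.
Qed.

Lemma del_or_swap_one_move {P : finType} {u : P} {A B : {set P}} :
  del_or_swap u A B -> one_move u A B.
Proof. by move=> [uB [del|swap]]; split=> //; right; [left | right]. Qed.

Section OneTwoMetric.
Context {P : finType} {d : P -> P -> nat}.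
Hypothesis metric : one_two_metric d.
Implicit Types (S : profile P) (u v w x : P) (p : seq P).

Lemma dist_self u : d u u = 0%N.
Proof. by case: metric. Qed.

Lemma dist_neq {u v} : u != v -> d u v = 1%N \/ d u v = 2%N.
Proof. by case: metric => _ [_]; apply. Qed.

Lemma dist_le2 u v : (d u v <= 2)%N.
Proof. by case: (eqVneq u v) => [->|/dist_neq[]->]; rewrite ?dist_self. Qed.

Lemma dist_eq0 {u v} : d u v = 0%N -> u = v.
Proof. by move=> e; apply/eqP; apply: contraT => /dist_neq; rewrite e; case. Qed.

Lemma dist_neq1 {u v} : u != v -> (d u v != 1%N) = (d u v == 2%N).
Proof. by case/dist_neq => ->. Qed.

Lemma greedy_mono {S S' v x p} : (forall a, S a \subset S' a) ->
  is_greedy d S v x p -> is_greedy d S' v x p.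
Proof.
rewrite /is_greedy => sub /andP[pp ->]; rewrite andbT.
by apply: sub_path pp => a b /andP[bS ->]; rewrite (subsetP (sub a)).
Qed.

Lemma greedy_shape {S u v p} : u != v -> is_greedy d S v u p ->
  (p = [:: v] /\ v \in S u) \/
  exists x, [/\ p = [:: x; v], x \in S u, v \in S x, d x v = 1%N & d u v = 2%N].
Proof.
move=> uv; rewrite /is_greedy; case: p => [|y [|z r]] /=.
- by move=> /eqP vu; rewrite vu eqxx in uv.
- by rewrite andbT => /andP[/andP[yS _] /eqP yv]; left; rewrite -yv.
move=> /andP[/andP[/andP[yS ylt] /andP[/andP[zS zlt] pr]] lst].
have duv := dist_neq uv.
have zv : z = v by apply: dist_eq0; lia.
subst z; rewrite dist_self in zlt.
case: r pr lst => [_ _|w r /= /andP[/andP[_]]]; last by rewrite dist_self.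
by right; exists y; split => //; lia.
Qed.

Lemma greedy_mem_cands {S u v p} : u != v -> is_greedy d S v u p -> p \in cands P.
Proof.
move=> uv /(greedy_shape uv) [[-> _]|[x [-> _ _ xv duv]]]; apply: mem_cands.
  by apply/card_gt1P; exists u, v.
have ux : u != x by apply: contra_eqN duv => /eqP ->; rewrite xv.
have xv' : x != v by apply: contra_eqN xv => /eqP ->; rewrite dist_self.
by apply/card_gt2P; exists u, x, v; split; split; rewrite // eq_sym.
Qed.

Lemma greedy_arc {S u v} : u != v -> v \in S u -> is_greedy d S v u [:: v].
Proof.
by move=> uv vS; rewrite /is_greedy /= vS dist_self eqxx; case: (dist_neq uv) => ->.
Qed.

Lemma greedy_two_hop {S u x v} : x \in S u -> v \in S x ->
  d x v = 1%N -> d u v = 2%N -> is_greedy d S v u [:: x; v].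
Proof. by move=> xS vS xv uv; rewrite /is_greedy /= xS vS xv uv dist_self eqxx. Qed.

(* The targets whose stretch is 3/2 unless u buys an arc to them. *)
Definition far_not_W11 S u : {set P} :=
  [set v | [&& v != u, d u v == 2%N & v \notin W11 d S u]].

Lemma notin_far_setD S u (X : {set P}) : u \notin far_not_W11 S u :\: X.
Proof. by rewrite in_setD in_set eqxx andbF. Qed.

Lemma card_add_far_setD S {u} {X : {set P}} :
  u \notin X -> (forall v, d u v = 1%N -> v \in X) ->
  (#|X| + #|far_not_W11 S u :\: X| =
   #|[set v | d u v == 1%N]| + #|[set v in X | d u v == 2%N] :&: W11 d S u|
   + #|far_not_W11 S u|)%N.
Proof.
move=> uX X1.
have D1X : [set v | d u v == 1%N] \subset X.
  by apply/subsetP => v; rewrite inE => /eqP; apply: X1.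
rewrite -(cardsID [set v | d u v == 1%N] X) (setIidPr D1X).
rewrite -(cardsID (W11 d S u) (X :\: _)).
rewrite -(cardsID X (far_not_W11 S u)) !addnA; congr (_ + _ + _ + _)%N.
all: apply: eq_card => v; rewrite !inE; case vX: (v \in X); rewrite ?andbF ?andbT //=.
all: have uv : u != v by apply: contraNneq uX => ->.
  by rewrite dist_neq1.
by rewrite dist_neq1 // eq_sym uv andbC.
Qed.

Section Stretches.
Context {R : realFieldType} {Z : R}.

Lemma stretch_le_greedy {S u v p} : p \in cands P -> is_greedy d S v u p ->
  stretch d Z S u v <= (plen d u p)%:R / (d u v)%:R.
Proof.
move=> pc g; have : plen d u p \in greedy_lens d S u v.
  by apply: map_f; rewrite mem_filter g pc.
rewrite /stretch; case: (greedy_lens d S u v) => [//|l ls] m.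
by rewrite ler_wpM2r ?invr_ge0 ?ler0n // ler_nat foldr_minn_le.
Qed.

Lemma stretch_cases S u v : stretch d Z S u v = Z \/
  exists p, is_greedy d S v u p /\ stretch d Z S u v = (plen d u p)%:R / (d u v)%:R.
Proof.
rewrite /stretch; case E: (greedy_lens d S u v) => [|l ls]; first by left.
right; have := foldr_minn_mem l ls; rewrite -E => /mapP [p].
by rewrite mem_filter => /andP[g _] ->; exists p.
Qed.

Lemma stretch_unreachable {S u v} : (forall p, ~~ is_greedy d S v u p) ->
  stretch d Z S u v = Z.
Proof.
rewrite /stretch => nog; case E: (greedy_lens d S u v) => [//|l ls].
have /mapP[p] : l \in greedy_lens d S u v by rewrite E inE eqxx.
by rewrite mem_filter (negbTE (nog p)).
Qed.

Lemma stretch_arc S u v : u != v -> v \in S u -> stretch d Z S u v <= 1.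
Proof.
move=> uv vS; have g := greedy_arc uv vS.
apply: le_trans (stretch_le_greedy (greedy_mem_cands uv g) g) _.
by rewrite /plen /= addn0 divff // pnatr_eq0; case: (dist_neq uv) => ->.
Qed.

Lemma stretch_two_hop {S u x v} : u != v -> x \in S u -> v \in S x ->
  d x v = 1%N -> d u v = 2%N -> stretch d Z S u v <= (d u x + 1)%:R / 2.
Proof.
move=> uv xS vS xv duv; have g := greedy_two_hop xS vS xv duv.
apply: le_trans (stretch_le_greedy (greedy_mem_cands uv g) g) _.
by rewrite /plen /= addn0 xv duv.
Qed.

Lemma greedy_ratio_le {S u v p} : u != v -> is_greedy d S v u p ->
  (plen d u p)%:R / (d u v)%:R <= 3%:R / 2 :> R.
Proof.
move=> uv /(greedy_shape uv) [[-> _]|[x [-> _ _ xv duv]]]; rewrite /plen /= addn0.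
  by rewrite divff ?pnatr_eq0; [lra | case: (dist_neq uv) => ->].
by rewrite xv duv ler_wpM2r ?invr_ge0 ?ler0n // ler_nat addn1 ltnS dist_le2.
Qed.

Lemma greedy_ratio_ge S u v p : u \notin S u -> u != v -> is_greedy d S v u p ->
  1 + (v \in far_not_W11 S u :\: S u)%:R / 2 <= (plen d u p)%:R / (d u v)%:R :> R.
Proof.
move=> uS uv /(greedy_shape uv) [[-> vS]|[x [-> xS vSx xv duv]]]; rewrite /plen /= addn0.
  by rewrite in_setD vS /= mul0r addr0 divff // pnatr_eq0; case: (dist_neq uv) => ->.
have ux : u != x by apply: contraNneq uS => ux; rewrite {1}ux.
rewrite xv duv; case: (dist_neq ux) => dux; rewrite dux.
  have vW : v \in W11 d S u.
    by rewrite inE eq_sym uv; apply/existsP; exists x; rewrite dux xS xv vSx eqxx.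
  by rewrite in_setD in_set vW !andbF /=; lra.
by case: (_ \in _) => /=; lra.
Qed.

Lemma stretch_ge S u v : u \notin S u -> u != v -> 3%:R / 2 <= Z ->
  1 + (v \in far_not_W11 S u :\: S u)%:R / 2 <= stretch d Z S u v.
Proof.
move=> uS uv Z32; case: (stretch_cases S u v) => [->|[p [g ->]]].
  by apply: le_trans Z32; case: (_ \in _) => /=; lra.
exact: greedy_ratio_ge.
Qed.

Lemma stretch_upd_le S u (T : {set P}) v :
  (forall x y, d x y = 1%N -> y \in S x) -> (forall y, d u y = 1%N -> y \in T) ->
  dominating d u T -> u != v ->
  stretch d Z (upd S u T) u v <= 1 + (v \in far_not_W11 S u :\: T)%:R / 2.
Proof.
move=> arcs1 T1 domT uv; set S' := upd S u T.
have S'u : S' u = T by rewrite /S' /upd eqxx.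
have S'x x : x != u -> S' x = S x by move=> xu; rewrite /S' /upd (negbTE xu).
have le1 : stretch d Z S' u v <= 1 ->
    stretch d Z S' u v <= 1 + (v \in far_not_W11 S u :\: T)%:R / 2.
  by move=> h; apply: le_trans h _; case: (_ \in _) => /=; lra.
case: (dist_neq uv) => duv.
  by apply/le1/stretch_arc; rewrite // S'u T1.
have [vT|vT] := boolP (v \in T); first by apply/le1/stretch_arc; rewrite ?S'u.
have [vW|vW] := boolP (v \in W11 d S u).
  move: vW; rewrite inE => /andP[_ /existsP[x /and4P[/eqP ux xS /eqP xv vSx]]].
  have xu : x != u by apply: contra_eqN ux => /eqP ->; rewrite dist_self.
  apply/le1/(le_trans (stretch_two_hop uv _ _ xv duv)); rewrite ?S'u ?S'x ?T1 //.
  by rewrite ux; lra.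
have vu : v != u by rewrite eq_sym.
have [x [xT xu xv]] := domT v vu vT.
rewrite in_setD in_set vT vu duv vW /=.
apply: le_trans (stretch_two_hop uv _ _ xv duv) _; rewrite ?S'u ?S'x ?arcs1 //.
have : (d u x)%:R <= 2%:R :> R by rewrite ler_nat dist_le2.
by rewrite natrD; lra.
Qed.

Section Costs.
Context {alpha : R}.
Hypotheses (alpha_gt0 : 0 < alpha) (Z_large : alpha + 2 <= Z).

Lemma three_halves_le_Z : 3%:R / 2 <= Z.
Proof. by move: alpha_gt0 Z_large; lra. Qed.

Lemma stretch_mono S S' u v : (forall a, S a \subset S' a) -> u != v ->
  stretch d Z S' u v <= stretch d Z S u v.
Proof.
move=> sub uv; case: (stretch_cases S u v) => [->|[p [g ->]]].
  case: (stretch_cases S' u v) => [->//|[p [g ->]]].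
  exact: le_trans (greedy_ratio_le uv g) three_halves_le_Z.
have g' := greedy_mono sub g.
exact: stretch_le_greedy (greedy_mem_cands uv g') g'.
Qed.

Lemma cost_upd_le {S u} {T : {set P}} :
  (forall x y, d x y = 1%N -> y \in S x) -> (forall y, d u y = 1%N -> y \in T) ->
  dominating d u T ->
  cost d Z alpha (upd S u T) u <=
    \sum_(v | v != u) 1 + #|far_not_W11 S u :\: T|%:R / 2 + alpha * #|T|%:R.
Proof.
move=> arcs1 T1 domT; rewrite /cost; have -> : upd S u T u = T by rewrite /upd eqxx.
rewrite -(sumr_mem_card _ (notin_far_setD S u T)) mulr_suml -big_split lerD2r /=.
by apply: ler_sum => v vu; apply: stretch_upd_le; rewrite // eq_sym.
Qed.

Lemma cost_ge {S u} : u \notin S u ->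
  \sum_(v | v != u) 1 + #|far_not_W11 S u :\: S u|%:R / 2 + alpha * #|S u|%:R
    <= cost d Z alpha S u.
Proof.
move=> uS; rewrite /cost -(sumr_mem_card _ (notin_far_setD S u (S u))).
rewrite mulr_suml -big_split lerD2r /=; apply: ler_sum => v vu.
by apply: stretch_ge; rewrite 1?eq_sym // three_halves_le_Z.
Qed.

Lemma add_unreachable_improves S u w : u \notin S u -> u != w ->
  (forall p, ~~ is_greedy d S w u p) ->
  cost d Z alpha (upd S u (w |: S u)) u < cost d Z alpha S u.
Proof.
move=> uS uw nog; set S' := upd S u (w |: S u).
have wS : w \notin S u by apply: contra (nog [:: w]); apply: greedy_arc.
have S'u : S' u = w |: S u by rewrite /S' /upd eqxx.
have sub a : S a \subset S' a.
  by rewrite /S' /upd; case: eqP => [->|_]; [apply: subsetUr | apply: subxx].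
have wu : w != u by rewrite eq_sym.
have new : stretch d Z S' u w <= 1 by apply: stretch_arc; rewrite // S'u setU11.
have rest : \sum_(v | (v != u) && (v != w)) stretch d Z S' u v <=
            \sum_(v | (v != u) && (v != w)) stretch d Z S u v.
  by apply: ler_sum => v /andP[vu _]; apply: stretch_mono; rewrite // eq_sym.
rewrite /cost S'u cardsU1 wS natrD (bigD1 w wu) [X in _ < X + _](bigD1 w wu) /=.
rewrite (stretch_unreachable nog); move: Z_large; lra.
Qed.

Lemma del_or_swap_improves S u (T : {set P}) : valid_profile S ->
  (forall x y, d x y = 1%N -> y \in S x) -> del_or_swap u (S u) T ->
  (forall y, d u y = 1%N -> y \in T) -> dominating d u T ->
  (#|[set v in T | d u v == 2%N] :&: W11 d S u| < #|W2plus d S u|)%N ->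
  cost d Z alpha (upd S u T) u < cost d Z alpha S u.
Proof.
move=> val arcs1 [uT moveT] T1 domT fewer.
have cT := card_add_far_setD S uT T1.
have cS := card_add_far_setD S (val u) (arcs1 u).
have lt : (#|T| + #|far_not_W11 S u :\: T| + 1
           <= #|S u| + #|far_not_W11 S u :\: S u|)%N.
  by move: fewer; rewrite /W2plus /W2 cT cS; lia.
have cardT : #|S u| = (#|T| + 1)%N \/ #|S u| = #|T|.
  case: moveT => [[v [vS ->]]|[v [w [vS [wS ->]]]]]; [left | right].
    by rewrite (cardsD1 v (S u)) vS addnC.
  by rewrite cardsU1 (cardsD1 v (S u)) vS in_setD1 (negbTE wS) andbF.
have up := cost_upd_le arcs1 T1 domT.
have lo := cost_ge (val u).
move: lt; rewrite -(ler_nat R) !natrD => lt.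
by case: cardT => e; rewrite e ?natrD in lo lt; move: alpha_gt0; lra.
Qed.

Section Equilibrium.
Context {S : profile P}.
Hypothesis GE : greedy_equilibrium d Z alpha S.

Lemma ge_reachable {u w} : u != w -> has (is_greedy d S w u) (cands P).
Proof.
move=> uw; apply: contraT => /hasPn nog; case: GE => val noimp.
exfalso; apply: (noimp u (w |: S u)).
  by split; [rewrite in_setU1 negb_or uw val | left; exists w].
apply: add_unreachable_improves => // p; apply/negP => g.
by have := nog p (greedy_mem_cands uw g); rewrite g.
Qed.

Lemma ge_arcs1 v w : d v w = 1%N -> w \in S v.
Proof.
move=> vw; have vw' : v != w by apply: contra_eqN vw => /eqP->; rewrite dist_self.
have /hasP[p _ /(greedy_shape vw')[[_ //]|[x [_ _ _ _ e]]]] := ge_reachable vw'.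
by rewrite vw in e.
Qed.

Lemma ge_dominating u : dominating d u (S u).
Proof.
move=> w wu wS; have uw : u != w by rewrite eq_sym.
have /hasP[p _ /(greedy_shape uw)[[_ wS']|[x [_ xS _ xw _]]]] := ge_reachable uw.
  by rewrite wS' in wS.
exists x; split=> //.
by apply: contraNneq (proj1 GE u) => xu; rewrite -{1}xu.
Qed.

Lemma ge_no_better_del_or_swap u N' : del_or_swap u (S u) N' ->
  ~ [/\ (forall v, d u v = 1%N -> v \in N'), dominating d u N' &
        (#|[set v in N' | d u v == 2%N] :&: W11 d S u| < #|W2plus d S u|)%N].
Proof.
move=> ds [N1 domN fewer]; case: GE => val noimp.
apply: (noimp u N' (del_or_swap_one_move ds)).
exact: del_or_swap_improves val ge_arcs1 ds N1 domN fewer.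
Qed.

Lemma ge_DSG : DSG d S.
Proof.
split; first exact: ge_arcs1.
by split; [exact: ge_dominating | exact: ge_no_better_del_or_swap].
Qed.

End Equilibrium.
End Costs.
End Stretches.
End OneTwoMetric.

Theorem lemma2p5 (R : realFieldType) (P : finType) (d : P -> P -> nat)
    (alpha : R) :
  one_two_metric d -> 0 < alpha ->
  exists Z0 : R, forall Z : R, Z0 <= Z ->
    forall S : profile P, greedy_equilibrium d Z alpha S -> DSG d S.
Proof.
move=> metric alpha_gt0; exists (alpha + 2) => Z Z_large S.
exact: (ge_DSG (R := R) metric alpha_gt0 Z_large).
Qed.
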